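(* For every $n\ge 4$, the pendant path graph $P_n^*$ is not $n$-EKR.
   Context: An independent $r$-set of a graph $G$ is a set of $r$ pairwise non-adjacent vertices; $\mathcal{I}^{(r)}(G)$ is the family of all independent $r$-sets, and $\mathcal{I}^{(r)}_v(G)$ the subfamily of those containing $v$ (the $r$-star centred at $v$). A family is intersecting if every two members have nonempty intersection. $G$ is $r$-EKR if some $r$-star $\mathcal{I}^{(r)}_v(G)$ has size equal to the maximum size of an intersecting subfamily of $\mathcal{I}^{(r)}(G)$. For a graph $G$ with vertices $x_1,\dots,x_n$, the pendant graph $G^*$ has vertex set $\{x_1,\dots,x_n\}\sqcup\{p_1,\dots,p_n\}$ and edge set $E(G)\sqcup\{x_1p_1,\dots,x_np_n\}$. $P_n$ is the path with vertices $x_1,\dots,x_n$ and edges $x_jx_{j+1}$, and $P_n^*$ its pendant graph. *)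

(* A (simple) graph is a relation [e : rel V] on a finType V
   (we only use it symmetric and irreflexive). *)
From mathcomp Require Import all_boot all_order.
Set Implicit Arguments. Unset Strict Implicit. Unset Printing Implicit Defensive.

Section Graphs.
Variable V : finType.
Variable e : rel V.

Definition indep_set (A : {set V}) : bool :=
  [forall x in A, forall y in A, ~~ e x y].

Definition indep_r (r : nat) : {set {set V}} :=
  [set A : {set V} | indep_set A && (#|A| == r)].

Definition star_r (r : nat) (v : V) : {set {set V}} :=
  [set A in indep_r r | v \in A].

Definition intersecting (F : {set {set V}}) : bool :=
  [forall A in F, forall B in F, A :&: B != set0].

Definition max_intersecting (r : nat) : nat :=
  \max_(F : {set {set V}} | (F \subset indep_r r) && intersecting F) #|F|.

Definition EKR (r : nat) : Prop :=
  exists v : V, #|star_r r v| = max_intersecting r.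
End Graphs.

(* pendant graph G^* : vertices inl x (original) and inr x (pendant p_x) *)
Definition pendant (T : finType) (e : rel T) : rel (T + T)%type :=
  fun u w =>
    match u, w with
    | inl a, inl b => e a b
    | inl a, inr b => a == b
    | inr a, inl b => a == b
    | inr _, inr _ => false
    end.

(* path P_n on vertices 'I_n (x_1..x_n shifted to 0..n-1): edges x_j x_{j+1} *)
Definition path_rel (n : nat) : rel 'I_n :=
  fun i j => (i.+1 == j :> nat) || (j.+1 == i :> nat).

From mathcomp Require Import all_boot all_order.
From mathcomp Require Import zify.
Set Implicit Arguments. Unset Strict Implicit. Unset Printing Implicit Defensive.

(* For a graph G on T, an independent #|T|-set of the
   pendant graph G^* contains exactly one of x_j, p_j for every j, so it is
   [pendant_set c] for a predicate c on T that is independent in G (c selects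
   the original vertices), and two disjoint such sets have complementary
   predicates.  On the path P_n two complementary independent predicates
   must alternate, so one of two disjoint independent n-sets of P_n^* is the
   set [even_set] of even original vertices and the odd pendants.  Hence
   I^(n)(P_n^* ) minus [even_set] is intersecting, of size |I| - 1.  On the
   other hand, for n >= 4 every vertex v misses two distinct independent
   n-sets, so every n-star has size at most |I| - 2.  The general criterion
   [not_EKR_criterion] turns these two facts into the theorem. *)

Section EKRCriterion.
Variables (V : finType) (e : rel V) (r : nat).

Lemma indepP (A : {set V}) (x y : V) :
  indep_set e A -> x \in A -> y \in A -> ~~ e x y.
Proof. by move=> /forall_inP iA xA yA; move/forall_inP: (iA x xA); apply. Qed.

Lemma intersecting_le_max (F : {set {set V}}) :
  F \subset indep_r e r -> intersecting F -> #|F| <= max_intersecting e r.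
Proof. by move=> sFI iF; apply: leq_bigmax_cond; rewrite sFI iF. Qed.

Lemma not_EKR_criterion (A0 : {set V}) :
  intersecting (indep_r e r :\ A0) ->
  (forall v, exists A B, [/\ A \in indep_r e r, B \in indep_r e r,
                             A != B, v \notin A & v \notin B]) ->
  ~ EKR e r.
Proof.
move=> iF avoid [v star_max].
have le_max := intersecting_le_max (subsetDl _ _) iF.
have I_le : #|indep_r e r| <= (#|indep_r e r :\ A0|).+1.
  by rewrite (cardsD1 A0 (indep_r e r)); case: (_ \in _).
have [A [B [AI BI neqAB vA vB]]] := avoid v.
have sub_star : star_r e r v \subset (indep_r e r :\ A) :\ B.
  apply/subsetP => C; rewrite !inE => /andP[CI vC]; rewrite CI andbT.
  by apply/andP; split; apply/eqP => eqC; [move: vB | move: vA]; rewrite -eqC vC.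
have card_rem : #|(indep_r e r :\ A) :\ B| + 2 = #|indep_r e r|.
  rewrite (cardsD1 A (indep_r e r)) AI (cardsD1 B (_ :\ A)).
  by rewrite in_setD1 eq_sym neqAB BI /=; lia.
have := subset_leq_card sub_star; lia.
Qed.

End EKRCriterion.

Section PendantIndependentSets.
Variables (T : finType) (e : rel T).
Local Notation I := (indep_r (pendant e) #|T|).

Definition indep_pred (c : pred T) : Prop := forall a b, c a -> c b -> ~~ e a b.

Lemma indep_pred1 (k : T) : irreflexive e -> indep_pred (pred1 k).
Proof. by move=> irr a b /eqP -> /eqP ->; rewrite irr. Qed.

Lemma indep_pred2 (j k : T) :
  irreflexive e -> symmetric e -> ~~ e j k -> indep_pred (pred2 j k).
Proof.
move=> irr sym njk a b /pred2P[] -> /pred2P[] ->; by rewrite ?irr // sym.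
Qed.

Definition pendant_set (c : pred T) : {set T + T} :=
  [set x | match x with inl j => c j | inr j => ~~ c j end].

Lemma pendant_set_inl (c : pred T) (j : T) : (inl j \in pendant_set c) = c j.
Proof. by rewrite inE. Qed.

Lemma pendant_set_inr (c : pred T) (j : T) : (inr j \in pendant_set c) = ~~ c j.
Proof. by rewrite inE. Qed.

Lemma eq_pendant_set (c d : pred T) : c =1 d -> pendant_set c = pendant_set d.
Proof. by move=> eqcd; apply/setP => -[j|j]; rewrite !inE eqcd. Qed.

Lemma pendant_set_neq (c d : pred T) (j : T) :
  c j != d j -> pendant_set c != pendant_set d.
Proof. by apply: contraNneq => eqcd; rewrite -!pendant_set_inl eqcd. Qed.

Lemma card_pendant_set (c : pred T) : #|pendant_set c| = #|T|.
Proof.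
have -> : pendant_set c = [set (if c j then inl j else inr j) | j : T].
  apply/setP => -[j|j]; rewrite inE; apply/idP/imsetP.
  - by move=> cj; exists j => //; rewrite cj.
  - by case=> k _; case ck: (c k) => // -[->].
  - by move=> cj; exists j => //; rewrite (negbTE cj).
  - by case=> k _; case ck: (c k) => // -[->]; rewrite ck.
rewrite card_imset // => a b.
by case: (c a); case: (c b) => // -[].
Qed.

Lemma pendant_set_indep (c : pred T) : indep_pred c -> pendant_set c \in I.
Proof.
move=> ic; rewrite inE card_pendant_set eqxx andbT.
apply/forall_inP => x; rewrite inE => cx; apply/forall_inP => y; rewrite inE => cy.
case: x cx => [a|a] ca; case: y cy => [b|b] cb //=.
- exact: ic.
- by apply: contraNneq cb => <-.
- by apply: contraNneq ca => ->.
Qed.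

(* An independent #|T|-set of G^* contains exactly one of x_j, p_j: the
   projection to T is injective on it (x_j p_j is an edge), hence onto. *)
Lemma indep_pendant_inr (A : {set T + T}) (j : T) :
  A \in I -> (inr j \in A) = (inl j \notin A).
Proof.
rewrite inE => /andP [iA /eqP cardA].
pose proj (x : T + T) := match x with inl j => j | inr j => j end.
have proj_inj : {in A &, injective proj}.
  move=> [a|a] [b|b] aA bA //= eqab; rewrite ?eqab //.
  - by have := indepP iA aA bA; rewrite /= eqab eqxx.
  - by have := indepP iA aA bA; rewrite /= eqab eqxx.
have : proj @: A = setT.
  by apply/eqP; rewrite eqEcard subsetT cardsT card_in_imset // cardA leqnn.
move/setP/(_ j); rewrite inE => /imsetP [x xA eqj].
apply/idP/idP.
- by move=> pA; apply/negP => xjA; have := indepP iA xjA pA; rewrite /= eqxx.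
- by case: x xA eqj => a aA -> //= /negbTE; rewrite aA.
Qed.

Lemma indep_pendant_setE (A : {set T + T}) :
  A \in I -> A = pendant_set (fun j => inl j \in A).
Proof.
by move=> AI; apply/setP => -[j|j]; rewrite inE // indep_pendant_inr.
Qed.

Lemma indep_pendant_pred (A : {set T + T}) :
  A \in I -> indep_pred (fun j => inl j \in A).
Proof. by rewrite inE => /andP[iA _] a b aA bA; exact: (indepP iA aA bA). Qed.

Lemma disjoint_complement (A B : {set T + T}) :
  A \in I -> B \in I -> A :&: B = set0 -> forall j, (inl j \in B) = (inl j \notin A).
Proof.
move=> AI BI disjAB j.
have notboth x : x \in A -> x \in B -> false.
  by move=> xA xB; rewrite -(in_set0 x) -disjAB inE xA xB.
case xA: (inl j \in A).
- by apply/negP => xB; have := notboth _ xA xB.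
- apply: contraT => xB; apply: (notboth (inr j)).
  + by rewrite indep_pendant_inr // xA.
  + by rewrite indep_pendant_inr.
Qed.

End PendantIndependentSets.

Section PendantPath.
Variable n : nat.
Local Notation G := (pendant (@path_rel n)).
Local Notation I := (indep_r G n).

Lemma path_rel_irr : irreflexive (@path_rel n).
Proof. by move=> i; rewrite /path_rel orbb; apply/eqP; lia. Qed.

Lemma path_rel_sym : symmetric (@path_rel n).
Proof. by move=> i j; rewrite /path_rel orbC. Qed.

Lemma path_pendant_set_indep (c : pred 'I_n) :
  indep_pred (@path_rel n) c -> pendant_set c \in I.
Proof. by rewrite -[X in indep_r _ X]card_ord; exact: pendant_set_indep. Qed.

Lemma path_complement_alternates (c d : pred 'I_n) :
  indep_pred (@path_rel n) c -> indep_pred (@path_rel n) d ->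
  (forall j, d j = ~~ c j) -> (forall j : 'I_n, val j = 0 -> c j) ->
  forall j : 'I_n, c j = ~~ odd j.
Proof.
move=> ic id dE c0 [m lt_mn]; elim: m lt_mn => [|m IH] lt_mn; first exact: c0.
have lt_m'n : m < n by apply: ltnW.
have adj : path_rel (Ordinal lt_m'n) (Ordinal lt_mn) by rewrite /path_rel /= eqxx.
rewrite /= -(IH lt_m'n).
case cm: (c (Ordinal lt_m'n)) => /=.
- by apply/negP => cm1; move: (ic _ _ cm cm1); rewrite adj.
- apply/negPn/negP => ncm1.
  have dm : d (Ordinal lt_m'n) by rewrite dE cm.
  have dm1 : d (Ordinal lt_mn) by rewrite dE.
  by move: (id _ _ dm dm1); rewrite adj.
Qed.

Definition even_set : {set 'I_n + 'I_n} := pendant_set (fun j : 'I_n => ~~ odd j).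

Lemma disjoint_pair_even (A B : {set 'I_n + 'I_n}) :
  0 < n -> A \in I -> B \in I -> A :&: B = set0 -> A = even_set \/ B = even_set.
Proof.
rewrite -[X in indep_r _ X]card_ord => n_gt0 AI BI disjAB.
have BE := disjoint_complement AI BI disjAB.
have AE j : (inl j \in A) = ~~ (inl j \in B) by rewrite BE negbK.
pose j0 := Ordinal n_gt0.
have at0 (C : {set 'I_n + 'I_n}) :
    inl j0 \in C -> forall j : 'I_n, val j = 0 -> inl j \in C.
  by move=> Cj0 j /eqP j_eq0; have -> : j = j0 by apply/val_inj/eqP.
case Aj0: (inl j0 \in A); [left | right].
- rewrite (indep_pendant_setE AI); apply: eq_pendant_set.
  exact: path_complement_alternates (indep_pendant_pred AI)
           (indep_pendant_pred BI) BE (at0 _ Aj0).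
- rewrite (indep_pendant_setE BI); apply: eq_pendant_set.
  apply: path_complement_alternates (indep_pendant_pred BI)
           (indep_pendant_pred AI) AE (at0 _ _).
  by rewrite BE Aj0.
Qed.

Lemma intersecting_without_even : 0 < n -> intersecting (I :\ even_set).
Proof.
move=> n_gt0; apply/forall_inP => A; rewrite in_setD1 => /andP[nA AI].
apply/forall_inP => B; rewrite in_setD1 => /andP[nB BI].
apply/negP => /eqP disjAB.
by case: (disjoint_pair_even n_gt0 AI BI disjAB) => eq_even;
  [move/eqP: nA | move/eqP: nB].
Qed.

(* For n >= 4, every vertex of P_n^* lies outside two distinct independent
   n-sets: for x_j take all pendants and one other x_k; for p_j take x_j
   alone and x_j together with a non-neighbour x_k. *)
Lemma avoiding_pair (v : 'I_n + 'I_n) : 4 <= n ->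
  exists A B, [/\ A \in I, B \in I, A != B, v \notin A & v \notin B].
Proof.
move=> n_ge4.
have indep1 (k : 'I_n) : indep_pred (@path_rel n) (pred1 k).
  exact: indep_pred1 path_rel_irr.
case: v => j.
- have lt_kn : (if val j == 0 then 1 else 0) < n by case: ifP => _; lia.
  pose k : 'I_n := Ordinal lt_kn.
  have neq_jk : j != k by rewrite -val_eqE /k /=; case: ifP; lia.
  exists (pendant_set pred0), (pendant_set (pred1 k)); split.
  + by apply: path_pendant_set_indep.
  + exact/path_pendant_set_indep/indep1.
  + by apply: (pendant_set_neq (j := k)); rewrite /= eqxx.
  + by rewrite pendant_set_inl.
  + by rewrite pendant_set_inl.
- have lt_kn : (if val j < 2 then 3 else 0) < n by case: ifP => _; lia.
  pose k : 'I_n := Ordinal lt_kn.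
  have far_jk : ~~ path_rel j k.
    by rewrite /path_rel /k /=; case: ifP => lt_j2; apply/norP; split; apply/eqP; lia.
  have neq_jk : j != k by rewrite -val_eqE /k /=; case: ifP; lia.
  exists (pendant_set (pred1 j)), (pendant_set (pred2 j k)); split.
  + exact/path_pendant_set_indep/indep1.
  + exact/path_pendant_set_indep/indep_pred2/far_jk/path_rel_sym/path_rel_irr.
  + apply: (pendant_set_neq (j := k)).
    by rewrite /= eqxx orbT (eq_sym k) (negbTE neq_jk).
  + by rewrite pendant_set_inr /= eqxx.
  + by rewrite pendant_set_inr /= eqxx.
Qed.

End PendantPath.

Theorem lemma9 (n : nat) : 4 <= n -> ~ EKR (pendant (@path_rel n)) n.
Proof.
move=> n_ge4; apply: (@not_EKR_criterion _ _ _ (even_set n)).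
- by apply: intersecting_without_even; lia.
- by move=> v; exact: avoiding_pair.
Qed.
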